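(* Let $(x,y,z,t)\in\mathbb{C}^4$ and $\lambda,\mu\in\mathbb{C}\setminus\{0\}$. Let $((x_n,y_n,z_n,t_n))_n$ be the optimal F sequence starting from $(x,y,z,t)$ and $((x'_n,y'_n,z'_n,t'_n))_n$ the optimal F sequence starting from $(\lambda x,\lambda y,\mu z,\mu t)$. Assume $z_\infty=\lim z_n$ and $z'_\infty=\lim z'_n$ exist and are nonzero, and that $L=\lim_n (x_n/z_\infty)^{2^n}$ and $L'=\lim_n (x'_n/z'_\infty)^{2^n}$ exist with $L\neq0$. Then $$\mu=\frac{z'_\infty}{z_\infty},\qquad \lambda=\frac{L'\,z'_\infty}{L\,z_\infty}.$$
   Context: Optimal F sequence: given $(x_0,y_0,z_0,t_0)\in\mathbb{C}^4$, define recursively $$(x_{n+1},y_{n+1},z_{n+1},t_{n+1})=\Big(\tfrac{\sqrt{x_n}\sqrt{z_n}+\sqrt{y_n}\sqrt{t_n}}{2},\ \tfrac{\sqrt{x_n}\sqrt{t_n}+\sqrt{y_n}\sqrt{z_n}}{2},\ \tfrac{z_n+t_n}{2},\ \sqrt{z_n}\sqrt{t_n}\Big),$$ where at each rank the square roots are chosen ''good'': $\Re\sqrt{x_n}\ge0$, $\Re\sqrt{z_n}\ge0$; either $|\sqrt{x_n}-\sqrt{y_n}|<|\sqrt{x_n}+\sqrt{y_n}|$ or equality and $\Im(\sqrt{y_n}/\sqrt{x_n})>0$; either $|\sqrt{z_n}-\sqrt{t_n}|<|\sqrt{z_n}+\sqrt{t_n}|$ or equality and $\Im(\sqrt{t_n}/\sqrt{z_n})>0$.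 *)

From Stdlib Require Import Reals Lra.
Open Scope R_scope.

Definition Cx : Type := (R * R)%type.
Definition Re (z : Cx) : R := fst z.
Definition Im (z : Cx) : R := snd z.
Definition C0 : Cx := (0, 0).
Definition C1 : Cx := (1, 0).
Definition C2 : Cx := (2, 0).
Definition Cadd (a b : Cx) : Cx := (Re a + Re b, Im a + Im b).
Definition Copp (a : Cx) : Cx := (- Re a, - Im a).
Definition Csub (a b : Cx) : Cx := Cadd a (Copp b).
Definition Cmul (a b : Cx) : Cx :=
  (Re a * Re b - Im a * Im b, Re a * Im b + Im a * Re b).
(* inverse; Cinv C0 = C0 by Rocq's total division *)
Definition Cinv (a : Cx) : Cx :=
  (Re a / (Re a * Re a + Im a * Im a), - Im a / (Re a * Re a + Im a * Im a)).
Definition Cdiv (a b : Cx) : Cx := Cmul a (Cinv b).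
Definition Cnorm (a : Cx) : R := sqrt (Re a * Re a + Im a * Im a).
Fixpoint Cpow (a : Cx) (n : nat) : Cx :=
  match n with O => C1 | S k => Cmul a (Cpow a k) end.

Definition Cconv (u : nat -> Cx) (l : Cx) : Prop :=
  forall eps : R, eps > 0 -> exists N : nat, forall n : nat, (n >= N)%nat ->
    Cnorm (Csub (u n) l) < eps.

Definition good_sqrts (a b sa sb : Cx) : Prop :=
  Cmul sa sa = a /\ Cmul sb sb = b /\ 0 <= Re sa /\
  (Cnorm (Csub sa sb) < Cnorm (Cadd sa sb) \/
   (Cnorm (Csub sa sb) = Cnorm (Cadd sa sb) /\ Im (Cdiv sb sa) > 0)).

Definition optimalF (x0 y0 z0 t0 : Cx) (x y z t : nat -> Cx) : Prop :=
  x O = x0 /\ y O = y0 /\ z O = z0 /\ t O = t0 /\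
  forall n : nat, exists sx sy sz st : Cx,
    good_sqrts (x n) (y n) sx sy /\ good_sqrts (z n) (t n) sz st /\
    x (S n) = Cdiv (Cadd (Cmul sx sz) (Cmul sy st)) C2 /\
    y (S n) = Cdiv (Cadd (Cmul sx st) (Cmul sy sz)) C2 /\
    z (S n) = Cdiv (Cadd (z n) (t n)) C2 /\
    t (S n) = Cmul sz st.

(* Good square roots of (k a, k b) are m sa, m sb, where (sa, sb) are good square roots of
   (a, b) and m is a square root of k: the sign of m is forced because goodness fails for
   (sa, - sb).  Hence the F sequence of (lam x, lam y, mu z, mu t) is (c_n x_n, c_n y_n,
   mu z_n, mu t_n) with (c_n / mu)^(2^n) = lam / mu, and passing to the limit gives
   z'_oo = mu z_oo and L' = (lam / mu) L. *)
From Pilot Require Import Defs.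
From Stdlib Require Import Reals Lra Lia.
From Coquelicot Require Complex.
Open Scope R_scope.

Declare Scope Cx_scope.
Delimit Scope Cx_scope with Cx.
Infix "+" := Cadd : Cx_scope.
Infix "-" := Csub : Cx_scope.
Notation "- a" := (Copp a) : Cx_scope.
Infix "*" := Cmul : Cx_scope.
Infix "/" := Cdiv : Cx_scope.
Infix "^" := Cpow : Cx_scope.
Local Open Scope Cx_scope.

Lemma Cx_field_theory : field_theory C0 Defs.C1 Cadd Cmul Csub Copp Cdiv Cinv eq.
Proof.
  constructor.
  - constructor; intros [a b]; try intros [c d]; try intros [e f];
      unfold Cadd, Cmul, Csub, Copp, C0, Defs.C1, Re, Im; simpl;
      try reflexivity; f_equal; ring.
  - unfold Defs.C1, C0; intros E; injection E; lra.
  - reflexivity.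
  - intros [a b] hab; unfold Cinv, Cmul, Defs.C1, Re, Im; simpl.
    assert (hn : (a * a + b * b)%R <> 0).
    { intro E; apply hab; unfold C0; f_equal; nra. }
    f_equal; field; exact hn.
Qed.

Add Field Cx_field : Cx_field_theory.

Lemma C2_neq0 : C2 <> C0.
Proof. unfold C2, C0; intros E; injection E; lra. Qed.

Lemma Cnorm_Cmod (a : Cx) : Cnorm a = Complex.Cmod a.
Proof. unfold Cnorm, Complex.Cmod, Re, Im; f_equal; simpl; ring. Qed.

Lemma Cnorm_mul (a b : Cx) : Cnorm (a * b) = (Cnorm a * Cnorm b)%R.
Proof. rewrite !Cnorm_Cmod; exact (Complex.Cmod_mult a b). Qed.

Lemma Cnorm_opp (a : Cx) : Cnorm (- a) = Cnorm a.
Proof. rewrite !Cnorm_Cmod; exact (Complex.Cmod_opp a). Qed.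

Lemma Cnorm_triangle (a b : Cx) : Cnorm (a + b) <= Cnorm a + Cnorm b.
Proof. rewrite !Cnorm_Cmod; exact (Complex.Cmod_triangle a b). Qed.

Lemma Cnorm_ge0 (a : Cx) : 0 <= Cnorm a.
Proof. rewrite Cnorm_Cmod; exact (Complex.Cmod_ge_0 a). Qed.

Lemma Cnorm_gt0 (a : Cx) : a <> C0 -> 0 < Cnorm a.
Proof. rewrite Cnorm_Cmod; exact (proj1 (Complex.Cmod_gt_0 a)). Qed.

Lemma Cnorm_eq0 (a : Cx) : Cnorm a = 0 -> a = C0.
Proof. rewrite Cnorm_Cmod; exact (Complex.Cmod_eq_0 a). Qed.

Lemma Cmul_eq0 (a b : Cx) : a * b = C0 -> a = C0 \/ b = C0.
Proof.
  intros E; assert (hn : (Cnorm a * Cnorm b)%R = 0).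
  { rewrite <- Cnorm_mul, E, Cnorm_Cmod; exact Complex.Cmod_0. }
  destruct (Rmult_integral _ _ hn); [left | right]; apply Cnorm_eq0; assumption.
Qed.

Lemma Csqr_eq (a b : Cx) : a * a = b * b -> a = b \/ a = - b.
Proof.
  intros E; assert (hf : (a - b) * (a + b) = C0).
  { replace ((a - b) * (a + b)) with (a * a - b * b) by ring; rewrite E; ring. }
  destruct (Cmul_eq0 _ _ hf) as [hd | hs]; [left | right].
  - replace a with (a - b + b) by ring; rewrite hd; ring.
  - replace a with (a + b - b) by ring; rewrite hs; ring.
Qed.

Lemma Cpow_mul_l (a b : Cx) (n : nat) : (a * b) ^ n = a ^ n * b ^ n.
Proof. induction n as [|n IH]; simpl; [|rewrite IH]; ring. Qed.

Lemma Cpow_double (a : Cx) (n : nat) : a ^ (2 * n) = (a * a) ^ n.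
Proof.
  induction n as [|n IH]; [reflexivity|].
  replace (2 * S n)%nat with (S (S (2 * n))) by lia; cbn [Cpow]; rewrite IH; ring.
Qed.

Lemma Cinv_C0 : Cinv C0 = C0.
Proof. unfold Cinv, C0, Re, Im; simpl; f_equal; unfold Rdiv; ring. Qed.

(* The last clause of [good_sqrts]. *)
Definition good_pair (sa sb : Cx) : Prop :=
  Cnorm (sa - sb) < Cnorm (sa + sb) \/
  (Cnorm (sa - sb) = Cnorm (sa + sb) /\ Im (sb / sa) > 0).

Lemma good_pair_neq0 (sa sb : Cx) : good_pair sa sb -> sa <> C0.
Proof.
  intros hg E; subst sa; unfold good_pair in hg.
  replace (C0 - sb) with (- (C0 + sb)) in hg by ring.
  rewrite Cnorm_opp in hg.
  replace (sb / C0) with C0 in hg by (unfold Cdiv; rewrite Cinv_C0; ring).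
  unfold Im, C0 in hg; simpl in hg; lra.
Qed.

Lemma good_pair_opp (sa sb : Cx) : good_pair sa sb -> ~ good_pair sa (- sb).
Proof.
  intros hg hg'; pose proof (good_pair_neq0 _ _ hg) as hsa; unfold good_pair in *.
  replace (sa - - sb) with (sa + sb) in hg' by ring.
  replace (sa + - sb) with (sa - sb) in hg' by ring.
  replace (- sb / sa) with (- (sb / sa)) in hg' by (field; exact hsa).
  change (Im (- (sb / sa))) with (- Im (sb / sa)%Cx)%R in hg'; lra.
Qed.

Lemma good_pair_scale (m sa sb : Cx) :
  m <> C0 -> good_pair sa sb -> good_pair (m * sa) (m * sb).
Proof.
  intros hm hg; pose proof (good_pair_neq0 _ _ hg) as hsa; unfold good_pair in *.
  replace (m * sa - m * sb) with (m * (sa - sb)) by ring.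
  replace (m * sa + m * sb) with (m * (sa + sb)) by ring.
  replace (m * sb / (m * sa)) with (sb / sa) by (field; split; assumption).
  rewrite !Cnorm_mul; pose proof (Cnorm_gt0 m hm) as hpos.
  destruct hg as [hlt | [heq him]].
  - left; apply Rmult_lt_compat_l; assumption.
  - right; rewrite heq; split; [reflexivity | exact him].
Qed.

Lemma good_sqrts_scale (a b k sa sb sa' sb' : Cx) :
  good_sqrts a b sa sb -> good_sqrts (k * a) (k * b) sa' sb' ->
  exists m, m * m = k /\ sa' = m * sa /\ sb' = m * sb.
Proof.
  intros (ha & hb & _ & hg) (ha' & hb' & _ & hg').
  pose proof (good_pair_neq0 _ _ hg) as hsa.
  pose proof (good_pair_neq0 _ _ hg') as hsa'.
  exists (sa' / sa).
  assert (hm : sa' / sa * (sa' / sa) = k).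
  { replace (sa' / sa * (sa' / sa)) with (sa' * sa' / (sa * sa)) by (field; exact hsa).
    rewrite ha', <- ha; field; exact hsa. }
  assert (hsa'E : sa' = sa' / sa * sa) by (field; exact hsa).
  assert (hm0 : sa' / sa <> C0).
  { intros E; apply hsa'; rewrite hsa'E, E; ring. }
  assert (hsb : sb' * sb' = (sa' / sa * sb) * (sa' / sa * sb)).
  { rewrite hb', <- hb, <- hm; ring. }
  split; [exact hm | split; [exact hsa'E |]].
  destruct (Csqr_eq _ _ hsb) as [E | E]; [exact E |].
  exfalso; apply (good_pair_opp (sa' / sa * sa) (sa' / sa * sb)).
  - exact (good_pair_scale _ _ _ hm0 hg).
  - rewrite <- hsa'E, <- E; exact hg'.
Qed.

Lemma optimalF_homogeneous (x0 y0 z0 t0 lam mu : Cx)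
  (x y z t x' y' z' t' : nat -> Cx) :
  mu <> C0 ->
  optimalF x0 y0 z0 t0 x y z t ->
  optimalF (lam * x0) (lam * y0) (mu * z0) (mu * t0) x' y' z' t' ->
  forall n, z' n = mu * z n /\ t' n = mu * t n /\
    exists c, x' n = c * x n /\ y' n = c * y n /\
      (c / mu) ^ Nat.pow 2 n = lam / mu.
Proof.
  intros hmu (hx0 & hy0 & hz0 & ht0 & hstep) (hx0' & hy0' & hz0' & ht0' & hstep').
  pose proof C2_neq0 as h2.
  induction n as [|n IH].
  - rewrite hx0', hy0', hz0', ht0', hx0, hy0, hz0, ht0.
    split; [reflexivity | split; [reflexivity |]].
    exists lam; split; [reflexivity | split; [reflexivity |]].
    simpl; ring.
  - destruct IH as (hz & ht & c & hx & hy & hc).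
    destruct (hstep n) as (sx & sy & sz & st & hgx & hgz & ex & ey & ez & et).
    destruct (hstep' n) as (sx' & sy' & sz' & st' & hgx' & hgz' & ex' & ey' & ez' & et').
    rewrite hx, hy in hgx'; rewrite hz, ht in hgz'.
    destruct (good_sqrts_scale _ _ _ _ _ _ _ hgx hgx') as (d & hd & -> & ->).
    destruct (good_sqrts_scale _ _ _ _ _ _ _ hgz hgz') as (m & hm & -> & ->).
    rewrite ex', ey', ez', et', ex, ey, ez, et, hz, ht.
    split; [field; exact h2 |].
    split; [rewrite <- hm; ring |].
    exists (d * m); split; [field; exact h2 | split; [field; exact h2 |]].
    change (Nat.pow 2 (S n)) with (2 * Nat.pow 2 n)%nat; rewrite Cpow_double.
    replace (d * m / mu * (d * m / mu)) with (d * d * (m * m) / (mu * mu))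
      by (field; exact hmu).
    rewrite hd, hm; replace (c * mu / (mu * mu)) with (c / mu) by (field; exact hmu).
    exact hc.
Qed.

Lemma Cconv_scale (u v : nat -> Cx) (k l : Cx) :
  (forall n, v n = k * u n) -> Cconv u l -> Cconv v (k * l).
Proof.
  intros hv hu eps heps; pose proof (Cnorm_ge0 k) as hk.
  destruct (hu (eps / (Cnorm k + 1))%R) as [N hN].
  { apply Rdiv_lt_0_compat; lra. }
  exists N; intros n hn; specialize (hN n hn); pose proof (Cnorm_ge0 (u n - l)).
  rewrite hv; replace (k * u n - k * l) with (k * (u n - l)) by ring.
  rewrite Cnorm_mul.
  apply Rle_lt_trans with ((Cnorm k + 1) * Cnorm (u n - l)%Cx)%R; [nra |].
  replace eps with ((Cnorm k + 1) * (eps / (Cnorm k + 1)))%R by (field; lra).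
  apply Rmult_lt_compat_l; lra.
Qed.

Lemma Cconv_unique (u : nat -> Cx) (l l' : Cx) : Cconv u l -> Cconv u l' -> l = l'.
Proof.
  intros hl hl'; destruct (Req_dec (Cnorm (l - l')) 0) as [E | E].
  - replace l with (l - l' + l') by ring; rewrite (Cnorm_eq0 _ E); ring.
  - pose proof (Cnorm_ge0 (l - l')) as hpos.
    destruct (hl (Cnorm (l - l')%Cx / 2)%R) as [N1 h1]; [lra |].
    destruct (hl' (Cnorm (l - l')%Cx / 2)%R) as [N2 h2]; [lra |].
    set (n := Nat.max N1 N2).
    specialize (h1 n ltac:(lia)); specialize (h2 n ltac:(lia)).
    pose proof (Cnorm_triangle (- (u n - l)) (u n - l')) as htri.
    rewrite Cnorm_opp in htri.
    replace (- (u n - l) + (u n - l')) with (l - l') in htri by ring.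
    lra.
Qed.

Theorem mainTheorem8 (x0 y0 z0 t0 lam mu : Cx)
  (x y z t x' y' z' t' : nat -> Cx) (zinf zinf' L L' : Cx) :
  lam <> C0 -> mu <> C0 ->
  optimalF x0 y0 z0 t0 x y z t ->
  optimalF (Cmul lam x0) (Cmul lam y0) (Cmul mu z0) (Cmul mu t0) x' y' z' t' ->
  Cconv z zinf -> zinf <> C0 ->
  Cconv z' zinf' -> zinf' <> C0 ->
  Cconv (fun n => Cpow (Cdiv (x n) zinf) (Nat.pow 2 n)) L ->
  Cconv (fun n => Cpow (Cdiv (x' n) zinf') (Nat.pow 2 n)) L' ->
  L <> C0 ->
  mu = Cdiv zinf' zinf /\ lam = Cdiv (Cmul L' zinf') (Cmul L zinf).
Proof.
  intros _ hmu hF hF' hz hzinf hz' _ hL hL' hL0.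
  pose proof (optimalF_homogeneous _ _ _ _ _ _ _ _ _ _ _ _ _ _ hmu hF hF') as hom.
  assert (hzinf'E : zinf' = mu * zinf).
  { apply (Cconv_unique z' _ _ hz'), (Cconv_scale z); [intro n; apply hom | exact hz]. }
  assert (hL'E : L' = lam / mu * L).
  { apply (Cconv_unique _ _ _ hL'), (Cconv_scale (fun n => (x n / zinf) ^ Nat.pow 2 n));
      [intro n | exact hL].
    destruct (hom n) as (_ & _ & c & hx & _ & hc).
    rewrite hx, hzinf'E, <- hc, <- Cpow_mul_l.
    f_equal; field; auto. }
  split; [rewrite hzinf'E | rewrite hL'E, hzinf'E]; field; auto.
Qed.
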